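(* $$\{\varphi\in\mathrm{End}_K(P_n)\mid [x_1,\varphi]\in F_n,\dots,[x_n,\varphi]\in F_n\}=\begin{cases}\mathbb{S}_1 & n=1,\\ P_n+F_n & n>1,\end{cases}$$ where $P_n=K[x_1,\dots,x_n]\subset\mathbb{S}_n$.
   Context: $K$ is a field of characteristic zero. $\mathbb{S}_n$ is the $K$-algebra generated by $x_1,\dots,x_n,y_1,\dots,y_n$ with defining relations $y_ix_i=1$ and $[x_i,y_j]=[x_i,x_j]=[y_i,y_j]=0$ for $i\ne j$; it acts faithfully on $P_n=K[x_1,\dots,x_n]$ by $x_i*x^\alpha=x^{\alpha+e_i}$, $y_i*x^\alpha=x^{\alpha-e_i}$ if $\alpha_i>0$ and $0$ otherwise, so $\mathbb{S}_n\subset\mathrm{End}_K(P_n)$. For $k,l\in\mathbb{N}$, $E_{kl}(i):=x_i^ky_i^l-x_i^{k+1}y_i^{l+1}$; for $\alpha,\beta\in\mathbb{N}^n$, $E_{\alpha\beta}:=\prod_{i=1}^nE_{\alpha_i\beta_i}(i)$ (so $E_{\alpha\beta}*x^\gamma=\delta_{\beta\gamma}x^\alpha$), and $F_n:=\bigoplus_{\alpha,\beta\in\mathbb{N}^n}KE_{\alpha\beta}$. *)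

From HB Require Import structures.
From mathcomp Require Import all_boot all_order all_algebra.
Set Implicit Arguments. Unset Strict Implicit. Unset Printing Implicit Defensive.
Import Order.TTheory GRing.Theory Num.Theory.
Local Open Scope ring_scope.

(* Exponent vectors alpha in N^n (monomials x^alpha). *)
Definition mono (n : nat) := {ffun 'I_n -> nat}.

(* alpha + e_i  and  alpha - e_i (truncated) *)
Definition up n (i : 'I_n) (a : mono n) : mono n := [ffun j => (a j + (j == i))%N].
Definition down n (i : 'I_n) (a : mono n) : mono n := [ffun j => (a j - (j == i))%N].

Definition finsupp (K : fieldType) n (c : mono n -> K) : Prop :=
  exists s : seq (mono n), forall a, c a != 0 -> a \in s.

(* P_n = K[x_1,...,x_n], represented by coefficient families of finite support;
   the element p is sum_alpha (sval p alpha) x^alpha. *)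
Definition P (K : fieldType) n := {c : mono n -> K | finsupp c}.

Lemma finsupp0 (K : fieldType) n : finsupp (fun _ : mono n => (0 : K)).
Proof. by exists [::] => a; rewrite eqxx. Qed.

Lemma finsupp_add (K : fieldType) n (c d : mono n -> K) :
  finsupp c -> finsupp d -> finsupp (fun a => c a + d a).
Proof.
move=> [s Hs] [t Ht]; exists (s ++ t) => a H; rewrite mem_cat.
case: (eqVneq (c a) 0) => [Hc|Hc]; last by rewrite Hs.
by move: H; rewrite Hc add0r => /Ht ->; rewrite orbT.
Qed.

Lemma finsupp_scale (K : fieldType) n (k : K) (c : mono n -> K) :
  finsupp c -> finsupp (fun a => k * c a).
Proof.
move=> [s Hs]; exists s => a H; apply: Hs; move: H; apply: contra => /eqP ->.
by rewrite mulr0.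
Qed.

Lemma finsupp_x (K : fieldType) n (i : 'I_n) (c : mono n -> K) :
  finsupp c -> finsupp (fun a => if (0 < a i)%N then c (down i a) else 0).
Proof.
move=> [s Hs]; exists (map (up i) s) => a; case: ifP => [Hpos H|]; last by rewrite eqxx.
apply/mapP; exists (down i a); first exact: Hs.
apply/ffunP => j; rewrite !ffunE; case: (eqVneq j i) => [->|] /=.
  by rewrite addn1 subn1 prednK.
by rewrite addn0 subn0.
Qed.

Lemma finsupp_y (K : fieldType) n (i : 'I_n) (c : mono n -> K) :
  finsupp c -> finsupp (fun a => c (up i a)).
Proof.
move=> [s Hs]; exists (map (down i) s) => a H; apply/mapP; exists (up i a).
  exact: Hs.
by apply/ffunP => j; rewrite !ffunE addnK.
Qed.

Definition P0 (K : fieldType) n : P K n := exist _ _ (@finsupp0 K n).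
Definition Padd (K : fieldType) n (p q : P K n) : P K n :=
  exist _ _ (finsupp_add (proj2_sig p) (proj2_sig q)).
Definition Pscale (K : fieldType) n (k : K) (p : P K n) : P K n :=
  exist _ _ (finsupp_scale k (proj2_sig p)).

Definition isLinEnd (K : fieldType) n (phi : P K n -> P K n) : Prop :=
  (forall p q, phi (Padd p q) = Padd (phi p) (phi q)) /\
  (forall k p, phi (Pscale k p) = Pscale k (phi p)).

(* The operators x_i and y_i acting on P_n:
   x_i * x^alpha = x^(alpha+e_i), y_i * x^alpha = x^(alpha-e_i) if alpha_i>0, else 0. *)
Definition xop (K : fieldType) n (i : 'I_n) (p : P K n) : P K n :=
  exist _ _ (finsupp_x i (proj2_sig p)).
Definition yop (K : fieldType) n (i : 'I_n) (p : P K n) : P K n :=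
  exist _ _ (finsupp_y i (proj2_sig p)).

Definition fzero (K : fieldType) n : P K n -> P K n := fun _ => @P0 K n.
Definition fadd (K : fieldType) n (f g : P K n -> P K n) : P K n -> P K n :=
  fun p => Padd (f p) (g p).
Definition fscale (K : fieldType) n (k : K) (f : P K n -> P K n) : P K n -> P K n :=
  fun p => Pscale k (f p).
Definition fsub (K : fieldType) n (f g : P K n -> P K n) : P K n -> P K n :=
  fadd f (fscale (-1) g).
Definition fpow (K : fieldType) n (f : P K n -> P K n) (k : nat) : P K n -> P K n :=
  iter k (fun h => f \o h) id.

Definition comm (K : fieldType) n (a b : P K n -> P K n) : P K n -> P K n :=
  fsub (a \o b) (b \o a).

Definition Ekl (K : fieldType) n (k l : nat) (i : 'I_n) : P K n -> P K n :=
  fsub (fpow (xop i) k \o fpow (yop i) l) (fpow (xop i) k.+1 \o fpow (yop i) l.+1).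

Definition Eab (K : fieldType) n (a b : mono n) : P K n -> P K n :=
  foldr (fun i acc => @Ekl K n (a i) (b i) i \o acc) id (enum 'I_n).

Definition inF (K : fieldType) n (psi : P K n -> P K n) : Prop :=
  exists s : seq (mono n * mono n * K),
    psi = foldr (fun t acc => fadd (fscale t.2 (@Eab K n t.1.1 t.1.2)) acc) (@fzero K n) s.

Inductive alg_gen (K : fieldType) n (G : (P K n -> P K n) -> Prop) :
    (P K n -> P K n) -> Prop :=
| ag_gen f : G f -> alg_gen G f
| ag_id : alg_gen G id
| ag_add f g : alg_gen G f -> alg_gen G g -> alg_gen G (fadd f g)
| ag_scale k f : alg_gen G f -> alg_gen G (fscale k f)
| ag_comp f g : alg_gen G f -> alg_gen G g -> alg_gen G (f \o g).

Definition inS (K : fieldType) n (phi : P K n -> P K n) : Prop :=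
  alg_gen (fun f => exists i : 'I_n, f = xop i \/ f = yop i) phi.

Definition inPn (K : fieldType) n (phi : P K n -> P K n) : Prop :=
  alg_gen (fun f => exists i : 'I_n, f = xop i) phi.

Definition inPF (K : fieldType) n (phi : P K n -> P K n) : Prop :=
  exists p f, inPn p /\ inF f /\ phi = fadd p f.

(* Endomorphisms are studied through their matrices on the monomial basis x^c.
   - F_n is exactly the set of linear maps with finitely many nonzero matrix entries
     ([inF_matrix]); hence it is a two-sided ideal of S_n, and a linear map lies in F_n
     iff it kills all monomials outside some box [0, M]^n ([inF_vanish], [inF_of_vanish]).
   - The converse inclusions: [x_i, .] is a derivation, [x_i, x_j] = 0, and for n = 1
     [x_1, y_1] = -E_00; so [x_i, .] maps S_1 (resp. P_n + F_n) into F_n.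
   - The main inclusion: if all [x_i, phi] lie in F_n, they all vanish outside one box,
     so phi(x^{c+d}) = x^d phi(x^c) whenever c is outside the box ([shift_region]).
     For n = 1 this makes phi agree outside the box with p(x) y^{M+1}, p = phi(x^{M+1});
     for n > 1, comparing phi(x^{(M+1)(e_i + e_j)}) computed in two ways shows that
     phi acts outside the box as multiplication by a fixed polynomial r.  In both cases
     phi differs from an element of S_1, resp. of P_n, by a map vanishing outside the
     box, i.e. by an element of F_n. *)

From HB Require Import structures.
From mathcomp Require Import all_boot all_order all_algebra zify.
From Stdlib Require Import FunctionalExtensionality ProofIrrelevance.
Set Implicit Arguments. Unset Strict Implicit. Unset Printing Implicit Defensive.
Import GRing.Theory.
Local Open Scope ring_scope.

Section Coefficients.
Variables (K : fieldType) (n : nat).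
Notation PK := (P K n).

Definition coef (p : PK) (a : mono n) : K := sval p a.

Lemma P_eq (p q : PK) : (forall a, coef p a = coef q a) -> p = q.
Proof.
move: p q => [c hc] [d hd] /= eq_cd.
have eq_fun : c = d by apply: functional_extensionality.
by subst d; rewrite (proof_irrelevance _ hc hd).
Qed.

Lemma coef_add p q a : coef (Padd p q) a = coef p a + coef q a. Proof. by []. Qed.
Lemma coef_scale k p a : coef (Pscale k p) a = k * coef p a. Proof. by []. Qed.
Lemma coef0 a : coef (P0 K n) a = 0. Proof. by []. Qed.
Lemma coef_x i p a : coef (xop i p) a = if (0 < a i)%N then coef p (down i a) else 0.
Proof. by []. Qed.
Lemma coef_y i p a : coef (yop i p) a = coef p (up i a). Proof. by []. Qed.

Lemma finsupp_mon (c : mono n) : finsupp (fun a : mono n => if a == c then (1 : K) else 0).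
Proof. by exists [:: c] => a; rewrite inE; case: (a == c); rewrite ?eqxx. Qed.

Definition mon (c : mono n) : PK := exist _ _ (finsupp_mon c).

Lemma coef_mon c a : coef (mon c) a = if a == c then 1 else 0. Proof. by []. Qed.

End Coefficients.

Section Exponents.
Variable n : nat.
Implicit Types a b c d : mono n.

Definition addm a b : mono n := [ffun j => (a j + b j)%N].
Definition subm a b : mono n := [ffun j => (a j - b j)%N].
Definition lem a b : bool := [forall j, (a j <= b j)%N].
Definition ee (i : 'I_n) (k : nat) : mono n := [ffun j => if j == i then k else 0%N].
Definition beyond (M : nat) c : bool := [exists j, (M < c j)%N].

Lemma lemP a b : reflect (forall j, (a j <= b j)%N) (lem a b).
Proof. exact: forallP. Qed.

Lemma lem_ee i k a : lem (ee i k) a = (k <= a i)%N.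
Proof.
apply/lemP/idP => [/(_ i)|le_k j]; rewrite ffunE ?eqxx //.
by case: eqP => [->|].
Qed.

Lemma down_up i a : down i (up i a) = a.
Proof. by apply/ffunP => j; rewrite !ffunE addnK. Qed.

Lemma up_down i a : (0 < a i)%N -> up i (down i a) = a.
Proof. by move=> a_pos; apply/ffunP => j; rewrite !ffunE; case: eqP => [->|] /=; lia. Qed.

Lemma up_comm i j a : up i (up j a) = up j (up i a).
Proof. by apply/ffunP => k; rewrite !ffunE -!addnA [((k == j) + _)%N]addnC. Qed.

Lemma addmC a b : addm a b = addm b a.
Proof. by apply/ffunP => j; rewrite !ffunE addnC. Qed.

Lemma lem_addr a b : lem a (addm b a).
Proof. by apply/lemP => j; rewrite ffunE leq_addl. Qed.

Lemma subm_addr a b : subm (addm a b) b = a.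
Proof. by apply/ffunP => j; rewrite !ffunE addnK. Qed.

Lemma addm_subm a b : lem b a -> addm b (subm a b) = a.
Proof. by move=> /lemP le_ba; apply/ffunP => j; rewrite !ffunE subnKC. Qed.

Lemma lem_addm a b c : lem (addm b c) a = lem b a && lem c (subm a b).
Proof.
apply/lemP/andP => [le_bca|[/lemP le_ba /lemP le_c] j].
  by split; apply/lemP => j; move: (le_bca j); rewrite !ffunE; lia.
by move: (le_ba j) (le_c j); rewrite !ffunE; lia.
Qed.

Lemma subm_addm a b c : subm (subm a b) c = subm a (addm b c).
Proof. by apply/ffunP => j; rewrite !ffunE subnDA. Qed.

Lemma addm_eq a b c : (a == addm c b) = lem c a && (b == subm a c).
Proof.
apply/eqP/andP => [->|[le_ca /eqP ->]]; last by rewrite addm_subm.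
by rewrite [addm c b]addmC lem_addr subm_addr.
Qed.

Lemma upE i a c : (a == up i c) = (0 < a i)%N && (down i a == c).
Proof.
apply/eqP/andP => [->|[a_pos /eqP <-]]; last by rewrite up_down.
by rewrite down_up ffunE eqxx addn1.
Qed.

Lemma beyond_add M c d : beyond M c -> beyond M (addm c d).
Proof. by case/existsP=> j lt_Mc; apply/existsP; exists j; rewrite ffunE ltn_addr. Qed.

Lemma beyond_ee M i : beyond M (ee i M.+1).
Proof. by apply/existsP; exists i; rewrite ffunE eqxx. Qed.

Lemma beyond_mono M M' c : (M <= M')%N -> beyond M' c -> beyond M c.
Proof. by move=> le_MM' /existsP[j lt_c]; apply/existsP; exists j; lia. Qed.

Lemma degree_down i a : (0 < a i)%N -> (\sum_j a j)%N = (\sum_j down i a j).+1%N.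
Proof.
move=> a_pos; rewrite (bigD1 i) //= [in RHS](bigD1 i) //= ffunE eqxx.
under [in RHS]eq_bigr => j /negbTE ne_ji do rewrite ffunE ne_ji subn0.
by rewrite -addSn subn1 prednK.
Qed.

Lemma mono_ind (Q : mono n -> Prop) :
  Q [ffun => 0%N] -> (forall i a, Q a -> Q (up i a)) -> forall a, Q a.
Proof.
move=> Q0 Qup a; have [k] := ubnP (\sum_j a j)%N; elim: k a => // k IH a.
case: (pickP (fun j => 0 < a j)%N) => [i a_pos|a0].
  rewrite (degree_down a_pos) ltnS => /IH /(Qup i).
  by rewrite up_down.
have -> // : a = [ffun => 0%N].
by apply/ffunP => j; rewrite ffunE; apply/eqP; rewrite -leqn0 leqNgt a0.
Qed.

End Exponents.

Section Linearity.
Variables (K : fieldType) (n : nat).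
Notation PK := (P K n).
Notation op := (PK -> PK).
Notation mon := (@mon K n).
Implicit Types (f g : op) (G : op -> Prop).

Lemma lin_x i : isLinEnd (@xop K n i).
Proof.
by split=> [p q|k p]; apply: P_eq => a; rewrite ?coef_add ?coef_scale !coef_x
  ?coef_add ?coef_scale; case: ifP; rewrite ?addr0 ?mulr0.
Qed.

Lemma lin_y i : isLinEnd (@yop K n i).
Proof. by split=> [p q|k p]; apply: P_eq. Qed.

Lemma lin_add f g : isLinEnd f -> isLinEnd g -> isLinEnd (fadd f g).
Proof.
move=> [fD fZ] [gD gZ]; split=> [p q|k p]; rewrite /fadd ?fD ?gD ?fZ ?gZ;
  apply: P_eq => a; rewrite !coef_add ?coef_scale ?coef_add.
  by rewrite addrACA.
by rewrite mulrDr.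
Qed.

Lemma lin_scale k f : isLinEnd f -> isLinEnd (fscale k f).
Proof.
move=> [fD fZ]; split=> [p q|c p]; rewrite /fscale ?fD ?fZ;
  apply: P_eq => a; rewrite ?coef_add !coef_scale ?coef_add ?coef_scale.
  by rewrite mulrDr.
by rewrite !mulrA (mulrC k).
Qed.

Lemma lin_comp f g : isLinEnd f -> isLinEnd g -> isLinEnd (f \o g).
Proof. by move=> [fD fZ] [gD gZ]; split=> [p q|c p] /=; rewrite ?gD ?fD ?gZ ?fZ. Qed.

Lemma compE f g p : (f \o g) p = f (g p). Proof. by []. Qed.

Lemma fpowS f k : fpow f k.+1 = f \o fpow f k. Proof. by []. Qed.

Lemma lin_fpow f k : isLinEnd f -> isLinEnd (fpow f k).
Proof. by move=> Lf; elim: k => [|k IH] //=; apply: lin_comp. Qed.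

Lemma lin_gen G f : (forall g, G g -> isLinEnd g) -> alg_gen G f -> isLinEnd f.
Proof.
move=> LG; elim=> {f} [f /LG //| |f g _ Lf _ Lg|k f _ Lf|f g _ Lf _ Lg] //.
- exact: lin_add.
- exact: lin_scale.
- exact: lin_comp.
Qed.

Lemma linS f : inS f -> isLinEnd f.
Proof. by apply: lin_gen => g [i [->|->]]; [apply: lin_x | apply: lin_y]. Qed.

Lemma linPn f : inPn f -> isLinEnd f.
Proof. by apply: lin_gen => g [i ->]; apply: lin_x. Qed.

Lemma lin0 f : isLinEnd f -> f (P0 K n) = P0 K n.
Proof.
move=> [_ fZ]; have zero : P0 K n = Pscale 0 (P0 K n) by apply: P_eq => a; rewrite coef_scale mul0r.
by rewrite zero fZ; apply: P_eq => a; rewrite !coef_scale !mul0r.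
Qed.

Lemma lin_ext f g : isLinEnd f -> isLinEnd g -> (forall c, f (mon c) = g (mon c)) -> f = g.
Proof.
move=> [fD fZ] [gD gZ] fg; apply: functional_extensionality => p.
have [s] := proj2_sig p; elim: s p => [|b s IH] p supp_p.
  have -> : p = P0 K n by apply: P_eq => a; apply/eqP/contraT => /supp_p.
  by rewrite !lin0.
pose p' := Padd p (Pscale (- coef p b) (mon b)).
have -> : p = Padd (Pscale (coef p b) (mon b)) p'.
  apply: P_eq => a; rewrite !coef_add !coef_scale coef_mon.
  by case: eqP => [->|_]; rewrite ?mulr1 ?mulr0 ?add0r ?addr0 // addrCA subrr addr0.
rewrite fD gD fZ gZ fg IH // => a.
rewrite -/(coef p' a) coef_add coef_scale coef_mon.
case: (eqVneq a b) => [->|ne_ab]; first by rewrite mulr1 subrr eqxx.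
by rewrite mulr0 addr0 => /supp_p; rewrite inE (negbTE ne_ab).
Qed.

End Linearity.

Section MonomialAction.
Variables (K : fieldType) (n : nat).
Notation PK := (P K n).
Notation op := (PK -> PK).
Notation mon := (@mon K n).
Notation P0 := (P0 K n).
Implicit Types (a b c : mono n) (p : PK).

Lemma x_mon i c : xop i (mon c) = mon (up i c).
Proof. by apply: P_eq => a; rewrite coef_x !coef_mon upE; case: ifP. Qed.

Lemma y_mon i c : yop i (mon c) = if (0 < c i)%N then mon (down i c) else P0.
Proof.
case: ifP => c_pos; apply: P_eq => a; rewrite coef_y !coef_mon ?coef0.
  by rewrite eq_sym upE c_pos eq_sym.
by case: eqP => // up_ac; move: c_pos; rewrite -up_ac ffunE eqxx addn1.
Qed.

Lemma coef_xpow i k p a :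
  coef (fpow (xop i) k p) a = if (k <= a i)%N then coef p (subm a (ee i k)) else 0.
Proof.
elim: k a => [|k IH] a.
  by rewrite leq0n; congr (coef p); apply/ffunP => j; rewrite !ffunE if_same subn0.
rewrite fpowS coef_x IH ffunE eqxx; case: (ltnP 0 (a i)) => [a_pos|]; last first.
  by rewrite leqn0 => /eqP ->.
have -> : (k <= a i - 1)%N = (k < a i)%N by lia.
congr (if _ then coef p _ else _); apply/ffunP => j; rewrite !ffunE.
by case: eqP => /=; lia.
Qed.

Lemma coef_ypow i l p a : coef (fpow (yop i) l p) a = coef p (addm a (ee i l)).
Proof.
elim: l a => [|l IH] a.
  by congr (coef p); apply/ffunP => j; rewrite !ffunE if_same addn0.
rewrite fpowS coef_y IH; congr (coef p); apply/ffunP => j; rewrite !ffunE.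
by case: eqP => /=; lia.
Qed.

Lemma xpow_mon i k c : fpow (xop i) k (mon c) = mon (addm c (ee i k)).
Proof.
apply: P_eq => a; rewrite coef_xpow !coef_mon addmC addm_eq lem_ee eq_sym.
by case: ifP.
Qed.

Lemma ypow_mon i l c :
  fpow (yop i) l (mon c) = if (l <= c i)%N then mon (subm c (ee i l)) else P0.
Proof.
apply: P_eq => a; rewrite coef_ypow coef_mon eq_sym addmC addm_eq lem_ee.
by case: (l <= c i)%N; rewrite /= ?coef_mon ?coef0.
Qed.

Definition setm i k c : mono n := [ffun j => if j == i then k else c j].

Lemma Ekl_mon k l i c : Ekl k l i (mon c) = if c i == l then mon (setm i k c) else P0.
Proof.
have lin_xpow m : isLinEnd (fpow (@xop K n i) m) by apply/lin_fpow/lin_x.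
rewrite /Ekl /fsub /fadd /fscale !compE !ypow_mon.
case: (ltngtP l (c i)) => [lt_lc|_|eq_lc].
- rewrite !xpow_mon (_ : addm _ (ee i k) = addm (subm c (ee i l.+1)) (ee i k.+1)).
    by apply: P_eq => a; rewrite coef_add coef_scale coef0 mulN1r subrr.
  by apply/ffunP => j; rewrite !ffunE; case: eqP => [->|] /=; lia.
- by rewrite !(lin0 (lin_xpow _)); apply: P_eq => a; rewrite coef_add coef_scale mulr0 addr0.
- rewrite (lin0 (lin_xpow _)) xpow_mon (_ : addm _ _ = setm i k c).
    by apply: P_eq => a; rewrite coef_add coef_scale coef0 mulr0 addr0.
  by apply/ffunP => j; rewrite !ffunE; case: eqP => [->|] /=; lia.
Qed.

Lemma lin_Ekl k l i : isLinEnd (@Ekl K n k l i).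
Proof.
rewrite /Ekl /fsub; apply: lin_add; last apply: lin_scale;
  by apply: lin_comp; apply: lin_fpow; [apply: lin_x | apply: lin_y].
Qed.

Lemma lin_Eab a b : isLinEnd (@Eab K n a b).
Proof.
by rewrite /Eab; elim: (enum 'I_n) => //= i L IH; apply: lin_comp => //; apply: lin_Ekl.
Qed.

Lemma Eab_mon a b c : Eab a b (mon c) = if c == b then mon a else P0.
Proof.
have partial (L : seq 'I_n) : uniq L ->
    foldr (fun i acc => @Ekl K n (a i) (b i) i \o acc) id L (mon c) =
    if all (fun i => c i == b i) L
    then mon [ffun j => if j \in L then a j else c j] else P0.
  elim: L => [|i L IH] /=; first by move=> _; congr mon; apply/ffunP => j; rewrite ffunE.
  case/andP=> iL uL; rewrite IH //; case: (boolP (all _ L)) => allL /=; last first.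
    by rewrite andbF; apply/lin0/lin_Ekl.
  rewrite Ekl_mon ffunE (negbTE iL) andbT; case: ifP => // _.
  by congr mon; apply/ffunP => j; rewrite !ffunE inE; case: eqP => [->|].
rewrite /Eab partial ?enum_uniq //.
have -> : all (fun i => c i == b i) (enum 'I_n) = (c == b).
  apply/allP/eqP => [cb|-> //]; apply/ffunP => j; apply/eqP/cb.
  by rewrite mem_enum.
by case: ifP => // _; congr mon; apply/ffunP => j; rewrite ffunE mem_enum.
Qed.

Definition xmon b : op := foldr (fun i acc => fpow (@xop K n i) (b i) \o acc) id (enum 'I_n).
Definition ymon b : op := foldr (fun i acc => fpow (@yop K n i) (b i) \o acc) id (enum 'I_n).

Lemma coef_xmon b p a : coef (xmon b p) a = if lem b a then coef p (subm a b) else 0.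
Proof.
have partial (L : seq 'I_n) : uniq L ->
    coef (foldr (fun i acc => fpow (@xop K n i) (b i) \o acc) id L p) a =
    if all (fun j => b j <= a j)%N L
    then coef p [ffun j => (a j - (if j \in L then b j else 0))%N] else 0.
  elim: L a => [|i L IH] a /=.
    by move=> _; congr (coef p); apply/ffunP => j; rewrite ffunE subn0.
  case/andP=> iL uL; rewrite coef_xpow; case: leqP => //= le_ba; rewrite IH //.
  have off_i : {in L, forall j, subm a (ee i (b i)) j = a j}.
    move=> j jL; rewrite !ffunE; case: eqP => [eq_ji|_]; last by rewrite subn0.
    by move: iL; rewrite -eq_ji jL.
  rewrite (@eq_in_all _ _ (fun j => b j <= a j)%N) => [|j /off_i -> //].
  case: all => //; congr (coef p); apply/ffunP => j; rewrite !ffunE inE.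
  by case: eqP => [->|_] /=; rewrite ?(negbTE iL) subn0.
rewrite /xmon partial ?enum_uniq //.
have -> : all (fun j => b j <= a j)%N (enum 'I_n) = lem b a.
  by apply/allP/lemP => [le_ba j|le_ba j _]; [apply: le_ba; rewrite mem_enum | apply: le_ba].
by case: ifP => // _; congr (coef p); apply/ffunP => j; rewrite !ffunE mem_enum.
Qed.

Lemma coef_ymon b p a : coef (ymon b p) a = coef p (addm a b).
Proof.
have partial (L : seq 'I_n) : uniq L ->
    coef (foldr (fun i acc => fpow (@yop K n i) (b i) \o acc) id L p) a =
    coef p [ffun j => (a j + (if j \in L then b j else 0))%N].
  elim: L a => [|i L IH] a /=.
    by move=> _; congr (coef p); apply/ffunP => j; rewrite ffunE addn0.
  case/andP=> iL uL; rewrite coef_ypow IH //; congr (coef p).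
  apply/ffunP => j; rewrite !ffunE inE.
  by case: eqP => [->|_]; rewrite /= ?eqxx ?(negbTE iL) ?addn0.
by rewrite /ymon partial ?enum_uniq //; congr (coef p); apply/ffunP => j; rewrite !ffunE mem_enum.
Qed.

Lemma xmon_mon b c : xmon b (mon c) = mon (addm c b).
Proof.
apply: P_eq => a; rewrite coef_xmon !coef_mon addmC addm_eq eq_sym.
by case: lem.
Qed.

Lemma ymon_mon b c : lem b c -> ymon b (mon c) = mon (subm c b).
Proof.
by move=> le_bc; apply: P_eq => a; rewrite coef_ymon !coef_mon eq_sym addmC addm_eq le_bc.
Qed.

Lemma xmonD b c p : xmon b (xmon c p) = xmon (addm b c) p.
Proof.
apply: P_eq => a; rewrite !coef_xmon lem_addm subm_addm.
by case: (lem b a).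
Qed.

Lemma xmon_inj b p q : xmon b p = xmon b q -> p = q.
Proof.
move=> eq_pq; apply: P_eq => a; move: (congr1 (fun r => coef r (addm a b)) eq_pq).
by rewrite !coef_xmon lem_addr subm_addr.
Qed.

Lemma alg_gen_fpow (G : op -> Prop) f k : alg_gen G f -> alg_gen G (fpow f k).
Proof. by move=> Gf; elim: k => [|k IH] /=; [apply: ag_id | apply: ag_comp]. Qed.

Lemma xmon_Pn b : inPn (xmon b).
Proof.
rewrite /xmon; elim: (enum 'I_n) => [|i L IH] /=; first exact: ag_id.
by apply: ag_comp => //; apply/alg_gen_fpow/ag_gen; exists i.
Qed.

Lemma ymon_S b : inS (ymon b).
Proof.
rewrite /ymon; elim: (enum 'I_n) => [|i L IH] /=; first exact: ag_id.
by apply: ag_comp => //; apply/alg_gen_fpow/ag_gen; exists i; right.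
Qed.

End MonomialAction.

Lemma sum_select (R : nmodType) (T : eqType) (s : seq T) (w : T -> R) b :
  uniq s -> (w b != 0 -> b \in s) -> \sum_(x <- s) (if x == b then w x else 0) = w b.
Proof.
move=> uniq_s supp_w; have -> : \sum_(x <- s) (if x == b then w x else 0) =
    (if b \in s then w b else 0).
  elim: s uniq_s {supp_w} => [|x s IH] /=; first by rewrite big_nil.
  case/andP=> xs uniq_s; rewrite big_cons IH // inE eq_sym.
  by case: eqP => [->|_] /=; rewrite ?(negbTE xs) ?addr0 ?add0r.
by case: ifPn => // /negP bs; apply/esym/eqP/contraT => /supp_w.
Qed.

Section FiniteRank.
Variables (K : fieldType) (n : nat).
Notation PK := (P K n).
Notation op := (PK -> PK).
Notation mon := (@mon K n).
Notation P0 := (P0 K n).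
Implicit Types (a b c : mono n) (f g : op).

Definition Fop (s : seq (mono n * mono n * K)) : op :=
  foldr (fun t acc => fadd (fscale t.2 (@Eab K n t.1.1 t.1.2)) acc) (@fzero K n) s.

Definition matrix_supp f (s : seq (mono n * mono n)) : Prop :=
  forall a c, coef (f (mon c)) a != 0 -> (a, c) \in s.

Lemma coef_Fop_mon s c a :
  coef (Fop s (mon c)) a = \sum_(t <- s) (if t.1 == (a, c) then t.2 else 0).
Proof.
elim: s => [|t s IH]; first by rewrite big_nil.
rewrite big_cons -IH [LHS]coef_add coef_scale Eab_mon.
case: t => [[a' c'] k] /=; congr (_ + _); rewrite xpair_eqE [c' == c]eq_sym.
case: (c == c'); rewrite ?andbF ?coef0 ?mulr0 // andbT coef_mon eq_sym.
by case: (a' == a); rewrite ?mulr1 ?mulr0.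
Qed.

Lemma lin_Fop s : isLinEnd (Fop s).
Proof.
elim: s => [|t s IH] /=; last by apply/lin_add/IH/lin_scale/lin_Eab.
by split=> *; apply: P_eq => a; rewrite /fzero ?coef_add ?coef_scale !coef0 ?addr0 ?mulr0.
Qed.

Lemma inF_matrix f : inF f <-> isLinEnd f /\ exists s, matrix_supp f s.
Proof.
split=> [[s ->]|[Lf [s supp_f]]].
  split; first exact: lin_Fop.
  exists [seq t.1 | t <- s] => a c; rewrite -/(Fop s) coef_Fop_mon.
  elim: s => [|t s IH]; first by rewrite big_nil eqxx.
  rewrite big_cons /= inE; case: ifP => [/eqP eq_t _|_].
    by apply/orP; left; apply/eqP.
  by rewrite add0r => /IH ->; rewrite orbT.
exists [seq (x, coef (f (mon x.2)) x.1) | x <- undup s]; apply: lin_ext => // [|c].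
  exact: lin_Fop.
apply: P_eq => a; rewrite -/(Fop _) coef_Fop_mon big_map /=.
rewrite (sum_select (w := fun x => coef (f (mon x.2)) x.1)) ?undup_uniq // mem_undup.
exact: supp_f.
Qed.

Lemma inF_lin f : inF f -> isLinEnd f.
Proof. by case/inF_matrix. Qed.

Lemma inF_transport f g (shift : mono n * mono n -> mono n * mono n) :
  inF f -> isLinEnd g ->
  (forall a c, coef (g (mon c)) a != 0 ->
     exists2 x, coef (f (mon x.2)) x.1 != 0 & (a, c) = shift x) ->
  inF g.
Proof.
case/inF_matrix=> _ [s supp_f] Lg supp_g; apply/inF_matrix; split=> //.
exists (map shift s) => a c /supp_g[x /supp_f fx ->].
by rewrite [x]surjective_pairing map_f.
Qed.

Lemma inF0 : inF (@fzero K n).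
Proof. by exists [::]. Qed.

Lemma inF_add f g : inF f -> inF g -> inF (fadd f g).
Proof.
move=> /inF_matrix[Lf [s supp_f]] /inF_matrix[Lg [t supp_g]].
apply/inF_matrix; split; first exact: lin_add.
exists (s ++ t) => a c; rewrite [coef _ _]coef_add mem_cat.
case: (eqVneq (coef (f (mon c)) a) 0) => [->|/supp_f -> //].
by rewrite add0r => /supp_g ->; rewrite orbT.
Qed.

Lemma inF_scale k f : inF f -> inF (fscale k f).
Proof.
move=> Ff; apply: (inF_transport (shift := id) Ff); first exact/lin_scale/inF_lin.
by move=> a c; rewrite [coef _ _]coef_scale mulf_eq0 negb_or => /andP[_ fac]; exists (a, c).
Qed.

Lemma inF_xl i f : inF f -> inF (xop i \o f).
Proof.
move=> Ff; apply: (inF_transport (shift := (fun x => (up i x.1, x.2))) Ff).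
  exact/lin_comp/inF_lin/Ff/lin_x.
move=> a c; rewrite compE coef_x; case: ifP => [a_pos fac|]; last by rewrite eqxx.
by exists (down i a, c); rewrite //= up_down.
Qed.

Lemma inF_yl i f : inF f -> inF (yop i \o f).
Proof.
move=> Ff; apply: (inF_transport (shift := (fun x => (down i x.1, x.2))) Ff).
  exact/lin_comp/inF_lin/Ff/lin_y.
by move=> a c; rewrite compE coef_y => fac; exists (up i a, c); rewrite //= down_up.
Qed.

Lemma inF_xr i f : inF f -> inF (f \o xop i).
Proof.
move=> Ff; apply: (inF_transport (shift := (fun x => (x.1, down i x.2))) Ff).
  exact/lin_comp/lin_x/inF_lin.
by move=> a c; rewrite compE x_mon => fac; exists (a, up i c); rewrite //= down_up.
Qed.

Lemma inF_yr i f : inF f -> inF (f \o yop i).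
Proof.
move=> Ff; have Lf := inF_lin Ff.
apply: (inF_transport (shift := (fun x => (x.1, up i x.2))) Ff); first exact/lin_comp/lin_y.
move=> a c; rewrite compE y_mon; case: ifP => [c_pos fac|_]; last by rewrite lin0 // eqxx.
by exists (a, down i c); rewrite //= up_down.
Qed.

Lemma inF_compr g f : inS g -> inF f -> inF (f \o g).
Proof.
move=> Sg; elim: Sg f => {g} [g [i [->|->]]| |g1 g2 _ IH1 _ IH2|k g _ IH|g1 g2 _ IH1 _ IH2] f Ff.
- exact: inF_xr.
- exact: inF_yr.
- by [].
- have [fD _] := inF_lin Ff.
  have -> : f \o fadd g1 g2 = fadd (f \o g1) (f \o g2).
    by apply: functional_extensionality => p; rewrite /= /fadd fD.
  exact: inF_add (IH1 _ Ff) (IH2 _ Ff).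
- have [_ fZ] := inF_lin Ff.
  have -> : f \o fscale k g = fscale k (f \o g).
    by apply: functional_extensionality => p; rewrite /= /fscale fZ.
  exact: inF_scale (IH _ Ff).
- exact: IH2 (IH1 _ Ff).
Qed.

Lemma inF_compl g f : inS g -> inF f -> inF (g \o f).
Proof.
move=> Sg; elim: Sg f => {g} [g [i [->|->]]| |g1 g2 _ IH1 _ IH2|k g _ IH|g1 g2 _ IH1 _ IH2] f Ff.
- exact: inF_xl.
- exact: inF_yl.
- by [].
- exact: inF_add (IH1 _ Ff) (IH2 _ Ff).
- exact: inF_scale (IH _ Ff).
- exact: IH1 (IH2 _ Ff).
Qed.

End FiniteRank.

Section FiniteRankCriterion.
Variables (K : fieldType) (n : nat).
Notation PK := (P K n).
Notation op := (PK -> PK).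
Notation mon := (@mon K n).
Notation P0 := (P0 K n).
Implicit Types (a b c : mono n) (f g : op).

Lemma inF_vanish f : inF f -> exists M, forall c, beyond M c -> f (mon c) = P0.
Proof.
case/inF_matrix=> _ [s supp_f]; exists (\max_(x <- s) \max_j x.2 j)%N => c.
case/existsP=> j lt_Mc; apply: P_eq => a; rewrite coef0; apply/eqP/contraT.
move=> /supp_f in_s; move: lt_Mc; rewrite ltnNge.
by rewrite (leq_trans (@leq_bigmax _ (fun j => c j) j) (leq_bigmax_seq _ in_s isT)).
Qed.

Lemma inF_of_vanish g M : isLinEnd g -> (forall c, beyond M c -> g (mon c) = P0) -> inF g.
Proof.
move=> Lg vanish; apply/inF_matrix; split=> //.
pose expo (u : {ffun 'I_n -> 'I_M.+1}) : mono n := [ffun j => nat_of_ord (u j)].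
have [supp supp_ok] := fin_all_exists (fun u => proj2_sig (g (mon (expo u)))).
exists [seq (a, expo u) | u <- enum {ffun 'I_n -> 'I_M.+1}, a <- supp u] => a c gca.
have in_box j : (c j < M.+1)%N.
  rewrite ltnS leqNgt; apply: contra gca => lt_Mc.
  by rewrite vanish ?coef0 //; apply/existsP; exists j.
have c_box : c = expo [ffun j => inord (c j)] by apply/ffunP => j; rewrite !ffunE inordK.
apply/allpairsPdep; exists [ffun j => inord (c j)], a; rewrite mem_enum -c_box.
by split=> //; apply: supp_ok; rewrite -c_box.
Qed.

End FiniteRankCriterion.

Section Commutators.
Variables (K : fieldType) (n : nat).
Notation PK := (P K n).
Notation op := (PK -> PK).
Notation mon := (@mon K n).
Notation P0 := (P0 K n).
Implicit Types (a b c : mono n) (f g h : op).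

Lemma coef_comm f g p a : coef (comm f g p) a = coef (f (g p)) a - coef (g (f p)) a.
Proof. by rewrite /comm /fsub /fadd /fscale coef_add coef_scale mulN1r. Qed.

Lemma comm_add h f g : isLinEnd h -> comm h (fadd f g) = fadd (comm h f) (comm h g).
Proof.
move=> [hD _]; apply: functional_extensionality => p; apply: P_eq => a.
by rewrite /fadd coef_add !coef_comm hD !coef_add opprD addrACA.
Qed.

Lemma comm_scale h k f : isLinEnd h -> comm h (fscale k f) = fscale k (comm h f).
Proof.
move=> [_ hZ]; apply: functional_extensionality => p; apply: P_eq => a.
by rewrite /fscale coef_scale !coef_comm hZ !coef_scale mulrBr.
Qed.

Lemma comm_comp h f g : isLinEnd f -> comm h (f \o g) = fadd (comm h f \o g) (f \o comm h g).
Proof.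
move=> [fD fZ]; apply: functional_extensionality => p; apply: P_eq => a.
rewrite coef_comm coef_add !compE coef_comm /comm /fsub /fadd /fscale fD fZ.
by rewrite coef_add coef_scale mulN1r addrA subrK.
Qed.

Lemma comm_id h : comm h id = @fzero K n.
Proof. by apply: functional_extensionality => p; apply: P_eq => a; rewrite coef_comm subrr. Qed.

Lemma alg_gen_S (G : op -> Prop) f : (forall g, G g -> inS g) -> alg_gen G f -> inS f.
Proof.
move=> GS; elim=> {f} [f /GS //| |f g _ Sf _ Sg|k f _ Sf|f g _ Sf _ Sg].
- exact: ag_id.
- exact: ag_add.
- exact: ag_scale.
- exact: ag_comp.
Qed.

Lemma PnS f : inPn f -> inS f.
Proof. by apply: alg_gen_S => g [i ->]; apply: ag_gen; exists i; left. Qed.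

Lemma alg_gen_fzero (G : op -> Prop) : alg_gen G (@fzero K n).
Proof.
have -> : @fzero K n = fscale 0 id.
  by apply: functional_extensionality => p; apply: P_eq => a; rewrite coef_scale mul0r.
exact/ag_scale/ag_id.
Qed.

Lemma inF_S f : inF f -> inS f.
Proof.
have Ekl_S k l i : inS (@Ekl K n k l i).
  apply: ag_add; last apply: ag_scale;
    by apply: ag_comp; apply/alg_gen_fpow/ag_gen; exists i; [left|right].
have Eab_S a b : inS (@Eab K n a b).
  rewrite /Eab; elim: (enum 'I_n) => [|i L IH] /=; first exact: ag_id.
  exact: ag_comp (Ekl_S _ _ _) IH.
case=> s ->; elim: s => [|t s IH] /=; first exact: alg_gen_fzero.
exact: ag_add (ag_scale _ (Eab_S _ _)) IH.
Qed.

Lemma comm_gen (G : op -> Prop) i : (forall g, G g -> inS g) ->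
  (forall g, G g -> inF (comm (xop i) g)) -> forall f, alg_gen G f -> inF (comm (xop i) f).
Proof.
move=> GS GF f; elim=> {f} [f /GF //| |f g Gf IHf Gg IHg|k f _ IHf|f g Gf IHf Gg IHg].
- by rewrite comm_id; apply: inF0.
- by rewrite comm_add; [apply: inF_add | apply: lin_x].
- by rewrite comm_scale; [apply: inF_scale | apply: lin_x].
- have Sf := alg_gen_S GS Gf; have Sg := alg_gen_S GS Gg.
  rewrite comm_comp; last exact: linS.
  by apply: inF_add; [apply: inF_compr | apply: inF_compl].
Qed.

Lemma lin_comm f g : isLinEnd f -> isLinEnd g -> isLinEnd (comm f g).
Proof. by move=> Lf Lg; apply/lin_add/lin_scale; apply: lin_comp. Qed.

Lemma comm_xx i j : comm (@xop K n i) (xop j) = @fzero K n.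
Proof.
apply: lin_ext => [||c]; [exact/lin_comm/lin_x/lin_x | exact: (lin_Fop [::]) |].
by apply: P_eq => a; rewrite coef_comm !x_mon up_comm subrr.
Qed.

Lemma comm_xy_mon i c : comm (@xop K n i) (yop i) (mon c) =
  if c i == 0%N then Pscale (-1) (mon c) else P0.
Proof.
apply: P_eq => a; rewrite coef_comm x_mon (@y_mon K n i (up i c)).
rewrite ffunE eqxx addn1 ltn0Sn down_up y_mon.
case: (posnP (c i)) => [ci0|ci_pos].
  by rewrite (lin0 (@lin_x K n i)) coef_scale coef0 sub0r mulN1r.
by rewrite x_mon up_down // subrr.
Qed.

End Commutators.

Section Multiplication.
Variables (K : fieldType) (n : nat).
Notation PK := (P K n).
Notation op := (PK -> PK).
Notation mon := (@mon K n).
Implicit Types (a b c : mono n) (f g : op) (p : PK).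

Definition lincomb (s : seq (mono n)) (w : mono n -> K) (F : mono n -> op) : op :=
  foldr (fun b acc => fadd (fscale (w b) (F b)) acc) (@fzero K n) s.

Lemma coef_lincomb s w F p a : coef (lincomb s w F p) a = \sum_(b <- s) w b * coef (F b p) a.
Proof. by elim: s => [|b s IH]; rewrite ?big_nil // big_cons -IH. Qed.

Lemma alg_gen_lincomb (G : op -> Prop) s w F :
  (forall b, alg_gen G (F b)) -> alg_gen G (lincomb s w F).
Proof.
move=> GF; elim: s => [|b s IH] /=; first exact: alg_gen_fzero.
exact/ag_add/IH/ag_scale/GF.
Qed.

Lemma mul_op p : exists2 m, inPn m & forall c, m (mon c) = xmon c p.
Proof.
have [s supp_p] := proj2_sig p.
exists (lincomb (undup s) (coef p) (@xmon K n)) => [|c].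
  by apply: alg_gen_lincomb => b; apply: xmon_Pn.
apply: P_eq => a; rewrite coef_lincomb coef_xmon.
under eq_bigr => b _ do rewrite xmon_mon coef_mon addm_eq.
case: (lem c a); last by rewrite big1 // => b _; rewrite mulr0.
rewrite -(@sum_select _ _ (undup s) (coef p) (subm a c)) ?undup_uniq //; last first.
  by rewrite mem_undup; apply: supp_p.
by apply: eq_bigr => b _; rewrite eq_sym; case: eqP; rewrite ?mulr1 ?mulr0.
Qed.

Lemma x_xmon i p : xop i p = xmon (ee i 1) p.
Proof.
apply: P_eq => a; rewrite coef_x coef_xmon lem_ee; case: ifP => // a_pos.
by congr (coef p); apply/ffunP => j; rewrite !ffunE; case: eqP => [->|] /=; lia.
Qed.

Lemma xmon0 p : xmon [ffun => 0%N] p = p.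
Proof.
apply: P_eq => a; rewrite coef_xmon (_ : lem _ a); last by apply/lemP => j; rewrite ffunE.
by congr (coef p); apply/ffunP => j; rewrite !ffunE subn0.
Qed.

Lemma inF_agree f g M : isLinEnd f -> isLinEnd g ->
  (forall c, beyond M c -> f (mon c) = g (mon c)) -> inF (fsub f g).
Proof.
move=> Lf Lg fg; apply: (@inF_of_vanish _ _ _ M) => [|c /fg fgc].
  exact/lin_add/lin_scale.
by apply: P_eq => a; rewrite [coef _ _]coef_add coef_scale fgc mulN1r subrr coef0.
Qed.

Lemma fadd_sub f g : fadd g (fsub f g) = f.
Proof.
apply: functional_extensionality => p; apply: P_eq => a.
by rewrite [LHS]coef_add [coef (fsub _ _ _) _]coef_add coef_scale mulN1r addrC subrK.
Qed.

End Multiplication.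

Section Centralizer.
Variables (K : fieldType) (n : nat).
Notation PK := (P K n).
Notation op := (PK -> PK).
Notation mon := (@mon K n).
Notation P0 := (P0 K n).
Implicit Types (a b c d : mono n) (f g : op) (p : PK).

Variable phi : op.
Hypothesis lin_phi : isLinEnd phi.
Hypothesis comm_phi : forall i, inF (comm (xop i) phi).

Lemma uniform_bound : exists M, forall i c, beyond M c -> comm (xop i) phi (mon c) = P0.
Proof.
have [Mi vanish_i] := fin_all_exists (fun i => inF_vanish (comm_phi i)).
exists (\max_i Mi i)%N => i c /(beyond_mono (leq_bigmax i)); exact: vanish_i.
Qed.

Section OutsideTheBox.
Variable M : nat.
Hypothesis comm_vanish : forall i c, beyond M c -> comm (xop i) phi (mon c) = P0.

Lemma shift_step i c : beyond M c -> phi (mon (up i c)) = xop i (phi (mon c)).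
Proof.
move=> /(comm_vanish i) comm0; apply: P_eq => a.
move: (congr1 (fun q => coef q a) comm0).
by rewrite coef_comm coef0 x_mon => /eqP; rewrite subr_eq0 => /eqP.
Qed.

Lemma shift_region c d : beyond M c -> phi (mon (addm c d)) = xmon d (phi (mon c)).
Proof.
move=> out_c; elim/mono_ind: d => [|i d IH].
  by rewrite xmon0; congr (phi (mon _)); apply/ffunP => j; rewrite !ffunE addn0.
have -> : addm c (up i d) = up i (addm c d) by apply/ffunP => j; rewrite !ffunE addnA.
rewrite shift_step ?beyond_add // IH x_xmon xmonD; congr (xmon _ _).
by apply/ffunP => j; rewrite !ffunE addnC.
Qed.

(* If the index set is a singleton {i0}, then outside the box phi agrees with the
   element p(x) y^{(M+1)e_i0} of S_n, where p = phi(x^{(M+1)e_i0}). *)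
Lemma agree_single (i0 : 'I_n) : (forall j, j = i0) ->
  exists2 Q, inS Q & forall c, beyond M c -> Q (mon c) = phi (mon c).
Proof.
move=> single; have [m Pm mE] := mul_op (phi (mon (ee i0 M.+1))).
exists (m \o ymon (ee i0 M.+1)) => [|c out_c]; first exact/ag_comp/ymon_S/PnS.
have le_c : lem (ee i0 M.+1) c by case/existsP: out_c => j; rewrite lem_ee (single j).
by rewrite compE ymon_mon // mE -shift_region ?beyond_ee // addm_subm.
Qed.

Local Notation corner j := (ee j M.+1).

(* If there are two distinct indices, phi acts outside the box as multiplication by
   the polynomial r = y^{(M+1)e_i0} phi(x^{(M+1)e_i0}). *)
Lemma agree_poly (i0 i1 : 'I_n) : i0 != i1 ->
  exists r, forall c, beyond M c -> phi (mon c) = xmon c r.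
Proof.
move=> ne_i01; set r := ymon (corner i0) (phi (mon (corner i0))).
have corner_swap j k : xmon (corner j) (phi (mon (corner k))) =
                       xmon (corner k) (phi (mon (corner j))).
  by rewrite -!shift_region ?beyond_ee // addmC.
(* phi(x^{(M+1)e_i0}) is divisible by x^{(M+1)e_i0}, as it also equals
   x^{(M+1)e_i0} phi(x^{(M+1)e_i1}) / x^{(M+1)e_i1}. *)
have corner_i0 : phi (mon (corner i0)) = xmon (corner i0) r.
  apply: P_eq => a; rewrite coef_xmon coef_ymon; case: ifP => [le_a|not_le_a].
    by rewrite addmC addm_subm.
  move: (congr1 (fun q => coef q (addm a (corner i1))) (corner_swap i1 i0)).
  rewrite !coef_xmon lem_addr subm_addr => ->; rewrite lem_ee !ffunE.
  by rewrite (negbTE ne_i01) addn0 -lem_ee not_le_a.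
have corner_all j : phi (mon (corner j)) = xmon (corner j) r.
  by apply: (@xmon_inj _ _ (corner i0)); rewrite corner_swap corner_i0 !xmonD addmC.
exists r => c /existsP[j lt_Mc]; have le_c : lem (corner j) c by rewrite lem_ee.
rewrite -{1}(addm_subm le_c) shift_region ?beyond_ee // corner_all xmonD.
by rewrite [addm (subm _ _) _]addmC addm_subm.
Qed.

End OutsideTheBox.

Lemma centralizer_single (i0 : 'I_n) : (forall j, j = i0) -> inS phi.
Proof.
move=> single; have [M vanish] := uniform_bound.
have [Q SQ agree] := agree_single vanish single; have lin_Q := linS SQ.
rewrite -(fadd_sub phi Q); apply: ag_add SQ (inF_S _).
by apply: (inF_agree (M := M)) => // c /agree ->.
Qed.

Lemma centralizer_poly (i0 i1 : 'I_n) : i0 != i1 -> inPF phi.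
Proof.
move=> ne_i01; have [M vanish] := uniform_bound.
have [r agree] := agree_poly vanish ne_i01; have [m Pm mE] := mul_op r.
exists m, (fsub phi m); split=> //; split; last by rewrite fadd_sub.
by apply: (inF_agree (M := M)) => // [|c /agree ->]; [apply: linPn | rewrite mE].
Qed.

End Centralizer.

Section Converse.
Variables (K : fieldType) (n : nat).
Notation op := (P K n -> P K n).
Implicit Types (f g : op).

(* If the index set is a singleton, [x_i, y_i] = -E_{00} lies in F_1. *)
Lemma comm_xy_single i : (forall j : 'I_n, j = i) -> inF (comm (@xop K n i) (yop i)).
Proof.
move=> single; apply/inF_matrix; split; first exact/lin_comm/lin_y/lin_x.
exists [:: ([ffun => 0%N], [ffun => 0%N])] => a c; rewrite comm_xy_mon.
case: (c i =P 0%N) => [ci0|_] /=; last by rewrite eqxx.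
have -> : c = [ffun => 0%N] by apply/ffunP => j; rewrite ffunE (single j).
by case: (a =P [ffun => 0%N]) => [->|]; rewrite ?inE ?mulr0 ?eqxx.
Qed.

Lemma comm_S_single i0 f : (forall j : 'I_n, j = i0) -> inS f -> forall i, inF (comm (xop i) f).
Proof.
move=> single Sf i; apply: (comm_gen _ _ Sf) => [g gen_g|g [j [->|->]]]; first exact: ag_gen.
  by rewrite comm_xx; apply: inF0.
by rewrite (single j) (single i); apply: comm_xy_single.
Qed.

Lemma lin_PF f : inPF f -> isLinEnd f.
Proof. by case=> p [g [Pp [Fg ->]]]; apply/lin_add/inF_lin/Fg/linPn. Qed.

(* Elements of P_n commute with the x_i and F_n is an ideal, so [x_i, P_n + F_n] lies in F_n. *)
Lemma comm_PF f : inPF f -> forall i, inF (comm (xop i) f).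
Proof.
case=> p [g [Pp [Fg ->]]] i; rewrite comm_add; last exact: lin_x.
apply: inF_add; last by apply: inF_add; [apply: inF_xl | apply/inF_scale/inF_xr].
apply: (comm_gen _ _ Pp) => [h [j ->]|h [j ->]]; first by apply: ag_gen; exists j; left.
by rewrite comm_xx; apply: inF0.
Qed.

End Converse.

Theorem corollary6p6 (K : fieldType) (HK : [pchar K] =i pred0) (n : nat)
    (hn : (0 < n)%N) (phi : P K n -> P K n) :
  (isLinEnd phi /\ forall i : 'I_n, inF (comm (xop i) phi)) <->
  (if n == 1%N then inS phi else inPF phi).
Proof.
pose i0 : 'I_n := Ordinal hn.
case: eqP => [n1|/eqP n_neq1].
- have single (j : 'I_n) : j = i0 by apply: val_inj => /=; have := ltn_ord j; lia.
  split=> [[lin_phi comm_phi]|Sphi]; first exact: centralizer_single single.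
  by split; [apply: linS | apply: comm_S_single single Sphi].
- have i1_lt : (1 < n)%N by lia.
  have ne_i01 : i0 != Ordinal i1_lt by [].
  split=> [[lin_phi comm_phi]|PFphi]; first exact: centralizer_poly ne_i01.
  by split; [apply: lin_PF | apply: comm_PF].
Qed.
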